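(* Let $B$ be the $3\times 2$ integer matrix of rank two \[ B = \begin{bmatrix} \phantom{-\lambda} r & \phantom{-\lambda} s \\ -\lambda r & -\lambda s \\ \phantom{-\lambda} a & \phantom{-\lambda} b \end{bmatrix} \] where $r, s, a, b$ are positive integers, $a \leq b$, $r \geq s$, $\gcd(r,s)=d$, and $0<\lambda = p/q$ in lowest terms (so that $q$ divides $r$ and $s$, since $\lambda r,\lambda s$ are integers), and set $M = \left[ \begin{smallmatrix} r/q & s/q \\ a & b \end{smallmatrix} \right]$. Given $\ell \in \mathbb{N}$, let $\phi_\ell : \mathbb{N}^2 \to \mathbb{Z}^3$ be the injective map $(w,k) \mapsto (qw, \lambda(q\ell - qw), k) = (qw, p(\ell - w), k)$. Then the image under $\phi_\ell$ of the band graph $G_\ell(M)$ is the slice graph $G_{S(q\ell)}(B)$.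
   Context: Notation: $\mathbb{N}=\{0,1,2,\dots\}$. For a subset $Q\subseteq \mathbb{Z}^n$ and an $n\times m$ integer matrix $M$, $G_Q(M)$ is the graph whose vertices are the elements of $Q$, with two vertices $u,v\in Q$ joined by an edge if and only if $u-v$ or $v-u$ is a column of $M$. For a rank two $2\times 2$ integer matrix $M$ with all entries positive and $\ell\in\mathbb{N}$, the band graph is $G_\ell(M) = G_{Q_\ell}(M)$ with $Q_\ell = \{u \in \mathbb{N}^2 \mid u_1 \leq \ell\}$. For $B$ as in the claim and $\ell$, the slice $S(\ell)$ is $\mathbb{N}^3 \cap \{(u_x,u_y,u_z) \mid u_y = -\lambda u_x + \lambda \ell\}$, and $G_{S(\ell)}(B)$ is the $\ell$th slice graph of $B$. The image $\phi_\ell(\{(w,k)\in\mathbb{N}^2 \mid 0\le w\le \ell\})$ is exactly the intersection with $\mathbb{N}^3$ of the hyperplane $u_y=-\lambda u_x+\lambda q\ell$. *)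

From HB Require Import structures.
From mathcomp Require Import all_boot all_order all_algebra.
Set Implicit Arguments. Unset Strict Implicit. Unset Printing Implicit Defensive.
Import Order.TTheory GRing.Theory Num.Theory.
Local Open Scope ring_scope.

Definition adj n m (M : 'M[int]_(n, m)) (u v : 'cV[int]_n) : bool :=
  [exists j : 'I_m, (u - v == col j M) || (v - u == col j M)].

(* The graph G_Q(M) is given by the vertex predicate Q and the matrix M;
   its edges are the pairs {u,v} of vertices of Q with adj M u v.
   [graph_image f Q M Q' M'] says that the image under f of G_Q(M)
   (vertices f(Q), edges f(u)f(v) for edges uv) equals G_{Q'}(M'). *)
Definition graph_image n m n' m' (f : 'cV[int]_n -> 'cV[int]_n')
  (Q : 'cV[int]_n -> Prop) (M : 'M[int]_(n, m))
  (Q' : 'cV[int]_n' -> Prop) (M' : 'M[int]_(n', m')) : Prop :=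
  (forall x, Q' x <-> exists2 u, Q u & f u = x) /\
  (forall x y, Q' x -> Q' y ->
     (adj M' x y <-> exists u v, [/\ Q u, Q v, f u = x, f v = y & adj M u v])).

Definition inN n (u : 'cV[int]_n) : Prop := forall i, 0 <= u i 0.

Definition band (l : nat) (u : 'cV[int]_2) : Prop :=
  inN u /\ u 0 0 <= l%:Z.

Definition slice (p q : nat) (t : nat) (u : 'cV[int]_3) : Prop :=
  inN u /\
  ((u 1 0)%:~R : rat) = - (p%:R / q%:R) * (u 0 0)%:~R + (p%:R / q%:R) * t%:R.

(* The matrix B = [[r, s]; [-lambda r, -lambda s]; [a, b]] with lambda = p/q
   (the entries lambda r, lambda s are integers by hypothesis). *)
Definition Bmat (r s a b p q : nat) : 'M[int]_(3, 2) :=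
  \matrix_(i < 3, j < 2)
    if i == 0 :> nat then (if j == 0 :> nat then r%:Z else s%:Z)
    else if i == 1 :> nat then (if j == 0 :> nat then - ((p * r) %/ q)%:Z
                                                else - ((p * s) %/ q)%:Z)
    else (if j == 0 :> nat then a%:Z else b%:Z).

Definition Mmat (r s a b q : nat) : 'M[int]_2 :=
  \matrix_(i < 2, j < 2)
    if i == 0 :> nat then (if j == 0 :> nat then (r %/ q)%:Z else (s %/ q)%:Z)
    else (if j == 0 :> nat then a%:Z else b%:Z).

Definition phi (p q l : nat) (u : 'cV[int]_2) : 'cV[int]_3 :=
  \col_(i < 3)
    if i == 0 :> nat then q%:Z * u 0 0
    else if i == 1 :> nat then p%:Z * (l%:Z - u 0 0)
    else u 1 0.

From HB Require Import structures.
From mathcomp Require Import all_boot all_order all_algebra ring.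
Import Order.TTheory GRing.Theory Num.Theory.
Local Open Scope ring_scope.

(* The map phi is affine, with injective linear part L : (w, k) |-> (q w, -p w, k),
   and B = L M once q divides r and s (which follows from q | p r, q | p s and
   gcd(p, q) = 1).  Adjacency depends only on differences and is preserved by
   injective linear maps, so phi u ~ phi v in G(B) iff u ~ v in G(M).  On
   vertices, phi u lies in N^3 iff u lies in the band, and phi u always satisfies
   the slice equation q x_1 + p x_0 = p q l; conversely a lattice point of the
   slice has q | p x_0, hence q | x_0, so it is of the form phi u. *)

Lemma adj_translate n m (M : 'M[int]_(n, m)) (u v c : 'cV[int]_n) :
  adj M (u + c) (v + c) = adj M u v.
Proof.
have shift x y : (x + c) - (y + c) = x - y by rewrite opprD addrACA subrr addr0.
by rewrite /adj !shift.
Qed.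

Lemma adj_mulmx n n' m (A : 'M[int]_(n', n)) (M : 'M[int]_(n, m))
    (u v : 'cV[int]_n) :
  injective (@mulmx _ n' n 1 A) -> adj (A *m M) (A *m u) (A *m v) = adj M u v.
Proof.
move=> injA; apply: eq_existsb => j.
by rewrite -!mulmxBr colE -mulmxA -colE !(inj_eq injA).
Qed.

Lemma graph_image_intro n m n' m' (f : 'cV[int]_n -> 'cV[int]_n')
    (Q : 'cV[int]_n -> Prop) (M : 'M[int]_(n, m))
    (Q' : 'cV[int]_n' -> Prop) (M' : 'M[int]_(n', m')) :
  (forall x, Q' x <-> exists2 u, Q u & f u = x) ->
  (forall u v, Q u -> Q v -> adj M' (f u) (f v) = adj M u v) ->
  graph_image f Q M Q' M'.
Proof.
move=> fQ f_adj; split=> // x y /fQ[u Qu <-] /fQ[v Qv <-]; split.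
- by rewrite f_adj // => uv; exists u, v.
- by case=> [u' [v' [Qu' Qv' <- <-]]]; rewrite f_adj.
Qed.

Definition phi_lin (p q : nat) : 'M[int]_(3, 2) :=
  \matrix_(i < 3, j < 2)
    if i == 0 :> nat then (if j == 0 :> nat then q%:Z else 0)
    else if i == 1 :> nat then (if j == 0 :> nat then - p%:Z else 0)
    else (if j == 0 :> nat then 0 else 1).

Lemma phi_lin_mul p q (u : 'cV[int]_2) :
  phi_lin p q *m u = \col_(i < 3)
    if i == 0 :> nat then q%:Z * u 0 0
    else if i == 1 :> nat then - (p%:Z * u 0 0)
    else u 1 0.
Proof.
have lift01 : lift ord0 ord0 = 1 :> 'I_2 by apply: val_inj.
apply/matrixP => i j; rewrite !mxE big_ord_recl big_ord1 lift01 !mxE /=.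
by case: i => [[|[|[|//]]]] Hi /=; rewrite ord1 !(mul0r, mul1r, addr0, add0r) ?mulNr.
Qed.

Lemma phi_affine p q l (u : 'cV[int]_2) :
  phi p q l u = phi_lin p q *m u + phi p q l 0.
Proof.
apply/matrixP => i j; rewrite phi_lin_mul ord1 !mxE.
case: i => [[|[|[|//]]]] Hi /=; ring.
Qed.

Lemma phi_lin_inj p q : (0 < q)%N -> injective (@mulmx _ 3 2 1 (phi_lin p q)).
Proof.
move=> q_gt0 u v /matrixP euv; rewrite !phi_lin_mul in euv.
have qz_neq0 : q%:Z != 0 by rewrite eqz_nat -lt0n.
apply/matrixP => i j; rewrite !ord1.
case: i => [[|[|//]]] Hi.
- have := euv 0 0; rewrite !mxE /= => /(mulfI qz_neq0).
  by have -> : Ordinal Hi = 0 by apply: val_inj.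
- have := euv 2%:R 0; rewrite !mxE /=.
  by have -> : Ordinal Hi = 1 by apply: val_inj.
Qed.

Lemma Bmat_factor r s a b p q : (q %| r)%N -> (q %| s)%N ->
  Bmat r s a b p q = phi_lin p q *m Mmat r s a b q.
Proof.
move=> q_dvd_r q_dvd_s; apply/matrixP => i j.
have lift01 : lift ord0 ord0 = 1 :> 'I_2 by apply: val_inj.
rewrite !mxE big_ord_recl big_ord1 lift01 !mxE /=.
case: i => [[|[|[|//]]]] Hi /=; case: j => [[|[|//]]] Hj /=;
  rewrite ?mul0r ?mulr0 ?addr0 ?add0r ?mul1r //.
- by rewrite -PoszM mulnC divnK.
- by rewrite -PoszM mulnC divnK.
- by rewrite mulNr -PoszM muln_divA.
- by rewrite mulNr -PoszM muln_divA.
Qed.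

Lemma sliceE p q t (x : 'cV[int]_3) : (0 < q)%N ->
  slice p q t x <-> inN x /\ q%:Z * x 1 0 + p%:Z * x 0 0 = p%:Z * t%:Z.
Proof.
move=> q_gt0; have qr_neq0 : (q%:R : rat) != 0 by rewrite pnatr_eq0 -lt0n.
apply: and_iff_compat_l; split=> [x1E | xE].
- apply: (@intr_inj rat); rewrite rmorphD !rmorphM /= x1E !pmulrn.
  by field.
- have := congr1 (intr : int -> rat) xE; rewrite rmorphD !rmorphM /= !pmulrn.
  by move=> /(canRL (addrK _)) /(canRL (mulKf qr_neq0)) ->; field.
Qed.

Lemma inN_phi p q l (u : 'cV[int]_2) : (0 < p)%N -> (0 < q)%N ->
  inN (phi p q l u) <-> band l u.
Proof.
move=> p_gt0 q_gt0; split.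
- move=> phiN; have := phiN 0; have := phiN 1; have := phiN 2%:R.
  rewrite !mxE /= => u1_ge0; rewrite pmulr_rge0 ?ltz_nat // subr_ge0 => u0_le_l.
  rewrite pmulr_rge0 ?ltz_nat // => u0_ge0.
  split=> // i; case: i => [[|[|//]]] Hi.
  + by have -> : Ordinal Hi = 0 by apply: val_inj.
  + by have -> : Ordinal Hi = 1 by apply: val_inj.
- case=> uN u0_le_l i; rewrite mxE.
  case: i => [[|[|[|//]]]] Hi /=.
  + by rewrite pmulr_rge0 ?ltz_nat ?uN.
  + by rewrite pmulr_rge0 ?ltz_nat ?subr_ge0.
  + exact: uN.
Qed.

Lemma slice_phi p q l (u : 'cV[int]_2) : (0 < p)%N -> (0 < q)%N ->
  slice p q (q * l) (phi p q l u) <-> band l u.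
Proof.
move=> p_gt0 q_gt0; rewrite sliceE // -(inN_phi _ _ _ _ p_gt0 q_gt0).
by split=> [[] // | phiN]; split=> //; rewrite !mxE /= PoszM; ring.
Qed.

Lemma col3P (x y : 'cV[int]_3) :
  x = y <-> [/\ x 0 0 = y 0 0, x 1 0 = y 1 0 & x 2%:R 0 = y 2%:R 0].
Proof.
split=> [-> // | [e0 e1 e2]]; apply/matrixP => i j; rewrite ord1.
case: i => [[|[|[|//]]]] Hi.
- by have -> : Ordinal Hi = 0 by apply: val_inj.
- by have -> : Ordinal Hi = 1 by apply: val_inj.
- by have -> : Ordinal Hi = 2%:R by apply: val_inj.
Qed.

Lemma slice_sub_phi_image p q l (x : 'cV[int]_3) :
  (0 < q)%N -> coprime p q -> slice p q (q * l) x -> exists u, phi p q l u = x.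
Proof.
move=> q_gt0 coprime_pq /(sliceE _ _ _ _ q_gt0) [_ xE].
have qz_neq0 : q%:Z != 0 by rewrite eqz_nat -lt0n.
have px0E := canRL (addKr _) xE.
have : p%:Z * x 0 0 \in dvdz q.
  rewrite px0E PoszM; apply: rpredD; first by rewrite rpredN dvdz_mulr ?dvdzz.
  by rewrite dvdz_mull ?dvdz_mulr ?dvdzz.
rewrite Gauss_dvdzr; last by rewrite coprimezE coprime_sym.
case/dvdzP => w x0E.
exists (\col_(i < 2) if i == 0 :> nat then w else x 2%:R 0).
apply/col3P; rewrite !mxE /=; split=> //; first by rewrite x0E mulrC.
apply: (mulfI qz_neq0); rewrite (canRL (addrK _) xE) x0E PoszM; ring.
Qed.

Lemma slice_phi_image p q l (x : 'cV[int]_3) :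
  (0 < p)%N -> (0 < q)%N -> coprime p q ->
  slice p q (q * l) x <-> exists2 u, band l u & phi p q l u = x.
Proof.
move=> p_gt0 q_gt0 coprime_pq.
split=> [x_slice | [u u_band <-]]; last exact/slice_phi.
have [u phi_u] := slice_sub_phi_image _ _ _ _ q_gt0 coprime_pq x_slice.
by exists u; rewrite // -(slice_phi _ _ _ _ p_gt0 q_gt0) phi_u.
Qed.

Theorem lemma4p5 (r s a b p q : nat) (l : nat) :
  (0 < r)%N -> (0 < s)%N -> (0 < a)%N -> (0 < b)%N ->
  (a <= b)%N -> (s <= r)%N ->
  (0 < p)%N -> (0 < q)%N -> coprime p q ->
  (q %| p * r)%N -> (q %| p * s)%N ->
  \rank (map_mx (fun x : int => x%:~R : rat) (Bmat r s a b p q)) = 2%N ->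
  graph_image (phi p q l) (band l) (Mmat r s a b q)
              (slice p q (q * l)) (Bmat r s a b p q).
Proof.
move=> _ _ _ _ _ _ p_gt0 q_gt0 coprime_pq.
have coprime_qp : coprime q p by rewrite coprime_sym.
rewrite !Gauss_dvdr // => q_dvd_r q_dvd_s _.
apply: graph_image_intro => [x | u v _ _]; first exact: slice_phi_image.
rewrite (phi_affine _ _ _ u) (phi_affine _ _ _ v) adj_translate.
by rewrite Bmat_factor // adj_mulmx //; apply: phi_lin_inj.
Qed.
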